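(* Let $\gamma\in\mathcal{M}_k\otimes\mathcal{M}_m$ be a pure state, i.e., a state of rank $1$. Then $\gamma\in CR_{k,m}$ if and only if $\gamma$ is separable, i.e., $\gamma=vv^*$ with $v=a\otimes b$ for some $a\in\mathbb{C}^k$, $b\in\mathbb{C}^m$.
   Context: $\mathcal{M}_k$ denotes the complex $k\times k$ matrices, and $\mathcal{M}_k\otimes\mathcal{M}_m$ is identified with $\mathcal{M}_{km}$ via the Kronecker product. A state is a positive semidefinite Hermitian matrix (not necessarily of trace one). For $\gamma=\sum_{i=1}^nA_i\otimes B_i\in\mathcal{M}_k\otimes\mathcal{M}_m$ define $G_\gamma:\mathcal{M}_k\to\mathcal{M}_m$, $G_\gamma(X)=\sum_i\mathrm{tr}(A_iX)B_i$, and $F_\gamma:\mathcal{M}_m\to\mathcal{M}_k$, $F_\gamma(Y)=\sum_i\mathrm{tr}(B_iY)A_i$. A linear map is positive if it maps positive semidefinite matrices to positive semidefinite matrices, and self-adjoint if self-adjoint with respect to $\langle X,Y\rangle=\mathrm{tr}(XY^* )$. For orthogonal projections $V,W$, $V\mathcal{M}_kW=\{VXW:X\in\mathcal{M}_k\}$. Given an orthogonal projection $V\in\mathcal{M}_k$ and a positive map $T:V\mathcal{M}_kV\to V\mathcal{M}_kV$, $T$ is irreducible if the only orthogonal projections $W$ with $W\mathcal{M}_kW\subseteq V\mathcal{M}_kV$ and $T(W\mathcal{M}_kW)\subseteq W\mathcal{M}_kW$ are $W=0$ and $W=V$. A self-adjoint positive map $T:\mathcal{M}_k\to\mathcal{M}_k$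 is completely reducible if there are orthogonal projections $W_1,\dots,W_l$ with $W_iW_j=0$ for $i\ne j$, $T(W_i\mathcal{M}_kW_i)\subseteq W_i\mathcal{M}_kW_i$ and $T|_{W_i\mathcal{M}_kW_i}$ irreducible for every $i$, and $T|_R\equiv0$, where $R$ is the orthogonal complement (trace inner product) of $\bigoplus_iW_i\mathcal{M}_kW_i$ in $\mathcal{M}_k$. $CR_{k,m}$ is the set of states $\gamma\in\mathcal{M}_k\otimes\mathcal{M}_m$ such that $F_\gamma\circ G_\gamma:\mathcal{M}_k\to\mathcal{M}_k$ is completely reducible. *)

(* Complex numbers are modelled as R[i] (= complex R,
   from mathcomp-real-closed) over an arbitrary R : realType. *)
From HB Require Import structures.
From mathcomp Require Import all_boot all_order all_algebra.
From mathcomp Require Import complex mxtens.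
From mathcomp Require Import reals.
Set Implicit Arguments. Unset Strict Implicit. Unset Printing Implicit Defensive.
Import Order.TTheory GRing.Theory Num.Theory.
Local Open Scope ring_scope.

Section Defs.
Variable C : numClosedFieldType.

Definition adjmx (p q : nat) (A : 'M[C]_(p, q)) : 'M[C]_(q, p) :=
  (map_mx Num.conj A)^T.

(* a "state": positive semidefinite Hermitian matrix (trace not normalized) *)
Definition is_state (n : nat) (A : 'M[C]_n) : Prop :=
  adjmx A = A /\ forall v : 'cV[C]_n, 0 <= (adjmx v *m A *m v) 0 0.

Definition tr_inner (n : nat) (X Y : 'M[C]_n) : C := \tr (X *m adjmx Y).

(* M_k (x) M_m is identified with M_{km} via the Kronecker product
   (mxtens: (A *t B) (i*m+p, j*q'+q) = A i j * B p q).  Every gamma in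
   M_{km} decomposes canonically as
     gamma = \sum_{i,j,p,q} gamma_{(i,p),(j,q)} E_ij (x) E_pq,
   and G_gamma, F_gamma are given by the defining formulas on this
   decomposition (they do not depend on the chosen decomposition). *)
Definition G_map (k m : nat) (gamma : 'M[C]_(k * m)) (X : 'M[C]_k) : 'M[C]_m :=
  \sum_(i < k) \sum_(j < k) \sum_(p < m) \sum_(q < m)
    (gamma (mxtens_index (i, p)) (mxtens_index (j, q))
      * \tr (delta_mx i j *m X)) *: delta_mx p q.

Definition F_map (k m : nat) (gamma : 'M[C]_(k * m)) (Y : 'M[C]_m) : 'M[C]_k :=
  \sum_(i < k) \sum_(j < k) \sum_(p < m) \sum_(q < m)
    (gamma (mxtens_index (i, p)) (mxtens_index (j, q))
      * \tr (delta_mx p q *m Y)) *: delta_mx i j.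

Definition orth_proj (k : nat) (W : 'M[C]_k) : Prop :=
  adjmx W = W /\ W *m W = W.

Definition corner_sub (k : nat) (W V : 'M[C]_k) : Prop :=
  forall X : 'M[C]_k, exists Y : 'M[C]_k, W *m X *m W = V *m Y *m V.

Definition corner_inv (k : nat) (T : 'M[C]_k -> 'M[C]_k) (W : 'M[C]_k) : Prop :=
  forall X : 'M[C]_k, exists Y : 'M[C]_k, T (W *m X *m W) = W *m Y *m W.

Definition positive_map (k : nat) (T : 'M[C]_k -> 'M[C]_k) : Prop :=
  forall X : 'M[C]_k, is_state X -> is_state (T X).

Definition selfadjoint_map (k : nat) (T : 'M[C]_k -> 'M[C]_k) : Prop :=
  forall X Y : 'M[C]_k, tr_inner (T X) Y = tr_inner X (T Y).

Definition irreducible_on (k : nat) (T : 'M[C]_k -> 'M[C]_k) (V : 'M[C]_k) : Prop :=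
  forall W : 'M[C]_k, orth_proj W -> corner_sub W V -> corner_inv T W ->
    W = 0 \/ W = V.

Definition completely_reducible (k : nat) (T : 'M[C]_k -> 'M[C]_k) : Prop :=
  selfadjoint_map T /\ positive_map T /\
  exists (l : nat) (W : 'I_l -> 'M[C]_k),
    [/\ forall i, orth_proj (W i),
        forall i j, i != j -> W i *m W j = 0,
        forall i, corner_inv T (W i),
        forall i, irreducible_on T (W i)
      & forall X : 'M[C]_k,
          (forall i (Y : 'M[C]_k), tr_inner X (W i *m Y *m W i) = 0) ->
          T X = 0].

Definition CR (k m : nat) (gamma : 'M[C]_(k * m)) : Prop :=
  is_state gamma /\ completely_reducible (fun X => F_map gamma (G_map gamma X)).

End Defs.

(* Write the pure state as gamma = v v^* and reshape v into the k x m matrix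
   V of its coordinates.  Then F_gamma o G_gamma is the sandwich X |-> A X A
   with A = V V^*.  For Hermitian A, an invariant corner W M_k W forces W to
   commute with A, so an irreducible block W contains an eigenvector w of A
   and is the rank-one projection w w^*.  Two blocks on which A does not
   vanish, w w^* and u u^*, would make X = w u^* a value of the sandwich that
   is orthogonal to every block yet nonzero.  So a single block survives and
   A P A = 0 for P = 1 - w w^*, whence V = w w^* V has rank one, V = a b^T,
   and v = a (x) b.  Conversely, for v = a (x) b we get A = c a a^*, and the
   single block a a^* / |a|^2 decomposes the sandwich. *)
From HB Require Import structures.
From mathcomp Require Import all_boot all_order all_algebra.
From mathcomp Require Import complex mxtens.
From mathcomp Require Import reals.
From mathcomp Require Import spectral.
From Stdlib Require Import FunctionalExtensionality.
Set Implicit Arguments.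
Unset Strict Implicit.
Unset Printing Implicit Defensive.
Import Order.TTheory GRing.Theory Num.Theory.
Local Open Scope ring_scope.

Section Adjoint.
Variable C : numClosedFieldType.

Lemma adjmxE p q (A : 'M[C]_(p, q)) i j : adjmx A i j = (A j i)^*.
Proof. by rewrite !mxE. Qed.

Lemma adjmxK p q (A : 'M[C]_(p, q)) : adjmx (adjmx A) = A.
Proof. by apply/matrixP => i j; rewrite !adjmxE conjCK. Qed.

Lemma adjmxM p q r (A : 'M[C]_(p, q)) (B : 'M[C]_(q, r)) :
  adjmx (A *m B) = adjmx B *m adjmx A.
Proof.
apply/matrixP => i j; rewrite adjmxE !mxE rmorph_sum; apply: eq_bigr => l _.
by rewrite rmorphM !adjmxE mulrC.
Qed.

Lemma adjmxB p q (A B : 'M[C]_(p, q)) : adjmx (A - B) = adjmx A - adjmx B.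
Proof. by apply/matrixP => i j; rewrite !mxE rmorphB. Qed.

Lemma adjmxZ p q c (A : 'M[C]_(p, q)) : adjmx (c *: A) = c^* *: adjmx A.
Proof. by apply/matrixP => i j; rewrite !mxE rmorphM. Qed.

Lemma adjmx0 p q : adjmx (0 : 'M[C]_(p, q)) = 0.
Proof. by apply/matrixP => i j; rewrite !mxE conjC0. Qed.

Lemma adjmx1 p : adjmx (1%:M : 'M[C]_p) = 1%:M.
Proof.
apply/matrixP => i j; rewrite !mxE eq_sym.
by case: eqP; rewrite ?conjC1 ?conjC0.
Qed.

Lemma adjmx_delta p q (i : 'I_p) (j : 'I_q) :
  adjmx (delta_mx i j : 'M[C]_(p, q)) = delta_mx j i.
Proof.
apply/matrixP => a b; rewrite !mxE.
by case: (a == j); case: (b == i); rewrite ?conjC1 ?conjC0.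
Qed.

Lemma adjmx_trmxC p q (A : 'M[C]_(p, q)) : adjmx A = (A ^t*)%sesqui.
Proof. by rewrite /adjmx -map_trmx. Qed.

Lemma mulmx_adjmx_eq0 p q (A : 'M[C]_(p, q)) : A *m adjmx A = 0 -> A = 0.
Proof.
move=> /matrixP AA0; apply/matrixP => i j; rewrite mxE.
move: (AA0 i i); rewrite !mxE => /eqP.
rewrite psumr_eq0; last by move=> l _; rewrite adjmxE mul_conjC_ge0.
move=> /allP/(_ j (mem_index_enum _))/implyP/(_ isT).
by rewrite adjmxE mul_conjC_eq0 => /eqP.
Qed.

Lemma adjmx_mulmx_eq0 p q (A : 'M[C]_(p, q)) : adjmx A *m A = 0 -> A = 0.
Proof.
move=> AA0; rewrite -[A]adjmxK.
by rewrite (mulmx_adjmx_eq0 (A := adjmx A)) ?adjmx0 ?adjmxK.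
Qed.

Lemma adjmx_col_gt0 n (x : 'cV[C]_n) : x != 0 -> 0 < (adjmx x *m x) 0 0.
Proof.
move=> x0; rewrite lt_def; apply/andP; split.
  apply: contra_neq x0 => xx0; apply: adjmx_mulmx_eq0.
  by rewrite [adjmx x *m x]mx11_scalar xx0 raddf0.
by rewrite mxE sumr_ge0 // => i _; rewrite adjmxE mulrC mul_conjC_ge0.
Qed.

Lemma col_normalize n (x : 'cV[C]_n) : x != 0 ->
  exists (w : 'cV[C]_n) (s : C), [/\ adjmx w *m w = 1%:M, x = s *: w & s != 0].
Proof.
move=> x0; have := adjmx_col_gt0 x0; set r := (adjmx x *m x) 0 0 => r_gt0.
have s_gt0 : 0 < sqrtC r by rewrite sqrtC_gt0.
have s0 : sqrtC r != 0 by rewrite gt_eqF.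
exists ((sqrtC r)^-1 *: x), (sqrtC r); split => //; last first.
  by rewrite scalerA mulfV // scale1r.
rewrite adjmxZ -scalemxAl -scalemxAr scalerA [adjmx x *m x]mx11_scalar -/r.
rewrite geC0_conj ?invr_ge0 ?ltW // scale_scalar_mx -invfM -expr2 sqrtCK.
by rewrite mulVf // gt_eqF.
Qed.

Lemma orth_proj_outer n (w : 'cV[C]_n) :
  adjmx w *m w = 1%:M -> orth_proj (w *m adjmx w).
Proof.
move=> ww; split; first by rewrite adjmxM adjmxK.
by rewrite mulmxA -(mulmxA w) ww mulmx1.
Qed.

Lemma orth_projC n (P : 'M[C]_n) : orth_proj P -> orth_proj (1%:M - P).
Proof.
move=> [hP PP]; split; first by rewrite adjmxB adjmx1 hP.
by rewrite mulmxBl !mulmxBr !mul1mx !mulmx1 PP subrr subr0.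
Qed.

End Adjoint.

Definition sandwich (C : numClosedFieldType) n (A X : 'M[C]_n) := A *m X *m A.

Section Sandwich.
Variables (C : numClosedFieldType) (n : nat).
Implicit Types (A X : 'M[C]_n) (w : 'cV[C]_n).

Lemma sandwichZ c A X : sandwich (c *: A) X = (c * c) *: sandwich A X.
Proof. by rewrite /sandwich -scalemxAl -scalemxAr -scalemxAl scalerA. Qed.

Lemma sandwich_outerE w X :
  sandwich (w *m adjmx w) X = (adjmx w *m X *m w) 0 0 *: (w *m adjmx w).
Proof.
have -> : sandwich (w *m adjmx w) X = w *m (adjmx w *m X *m w) *m adjmx w.
  by rewrite /sandwich !mulmxA.
by rewrite {1}[adjmx w *m X *m w]mx11_scalar mul_mx_scalar -scalemxAl.
Qed.

Lemma sandwich0_cr : completely_reducible (sandwich (0 : 'M[C]_n)).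
Proof.
rewrite /sandwich; split.
  by move=> X Y; rewrite /tr_inner !(mul0mx, mulmx0, adjmx0).
split.
  by move=> X _; split=> [|v]; rewrite !(mul0mx, mulmx0, adjmx0) ?mxE.
by exists 0%N, (fun=> 0); split=> [[]|[]|[]|[]|X _]; rewrite // mul0mx mulmx0.
Qed.

Lemma corner_sub_outer W w : adjmx w *m w = 1%:M ->
  orth_proj W -> corner_sub W (w *m adjmx w) -> W = 0 \/ W = w *m adjmx w.
Proof.
move=> ww [_ WW] /(_ 1%:M) [Y].
rewrite mulmx1 WW -/(sandwich _ Y) sandwich_outerE; set t := _ 0 0 => Wt.
have [_ PP] := orth_proj_outer ww.
have wPw : adjmx w *m (w *m adjmx w) *m w = 1%:M.
  by rewrite !mulmxA ww mul1mx ww.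
have tt : t * t = t.
  move: WW; rewrite Wt -scalemxAl -scalemxAr scalerA PP.
  move=> /(congr1 (fun M => adjmx w *m M *m w)).
  rewrite -!scalemxAr -!scalemxAl wPw => /matrixP/(_ 0 0).
  by rewrite !mxE eqxx !mulr1.
have : t * (t - 1) = 0 by rewrite mulrBr mulr1 tt subrr.
move/eqP; rewrite mulf_eq0 subr_eq0 Wt => /orP[]/eqP ->.
  by left; rewrite scale0r.
by right; rewrite scale1r.
Qed.

End Sandwich.

Section PureStateMaps.
Variables (C : numClosedFieldType) (k m : nat).

Definition unvec (v : 'cV[C]_(k * m)) : 'M[C]_(k, m) :=
  \matrix_(i, p) v (mxtens_index (i, p)) 0.

Lemma unvec_inj : injective unvec.
Proof.
move=> v w /matrixP vw; apply/colP => x.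
by case: (mxtens_indexP x) => i p; have := vw i p; rewrite !mxE.
Qed.

Lemma unvec_tens (a : 'cV[C]_k) (b : 'cV[C]_m) : unvec (a *t b) = a *m b^T.
Proof.
apply/matrixP => i p; rewrite !mxE big_ord1 mxtens_indexK /= !mxE.
by rewrite [Ordinal _]ord1 [Ordinal _]ord1.
Qed.

Lemma outer_tensE (v : 'cV[C]_(k * m)) i p j q :
  (v *m adjmx v) (mxtens_index (i, p)) (mxtens_index (j, q)) =
  unvec v i p * (unvec v j q)^*.
Proof. by rewrite mxE big_ord1 adjmxE !mxE. Qed.

Lemma mxtrace_delta_mul n (i j : 'I_n) (X : 'M[C]_n) :
  \tr (delta_mx i j *m X) = X j i.
Proof.
rewrite -(mul_delta_mx (0 : 'I_1)) -mulmxA mxtrace_mulC -rowE -colE.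
by rewrite trace_mx11 !mxE.
Qed.

Lemma sum_scale_delta_mx p q (f : 'I_p -> 'I_q -> C) :
  \sum_i \sum_j f i j *: delta_mx i j = \matrix_(i, j) f i j.
Proof.
rewrite [RHS]matrix_sum_delta.
by apply: eq_bigr => i _; apply: eq_bigr => j _; rewrite mxE.
Qed.

Lemma G_map_outer (v : 'cV[C]_(k * m)) X :
  G_map (v *m adjmx v) X = (adjmx (unvec v) *m X *m unvec v)^T.
Proof.
apply/matrixP => p q; rewrite /G_map !mxE summxE; apply: eq_bigr => i _.
rewrite summxE mxE mulr_suml; apply: eq_bigr => j _.
rewrite sum_scale_delta_mx mxE mxtrace_delta_mul outer_tensE adjmxE.
by rewrite [RHS]mulrC mulrA.
Qed.

Lemma F_map_outer (v : 'cV[C]_(k * m)) Y :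
  F_map (v *m adjmx v) Y = unvec v *m Y^T *m adjmx (unvec v).
Proof.
rewrite /F_map; under eq_bigr => i _ do under eq_bigr => j _ do
  (under eq_bigr => p _ do rewrite -scaler_suml; rewrite -scaler_suml).
rewrite sum_scale_delta_mx; apply/matrixP => i j; rewrite !mxE exchange_big /=.
apply: eq_bigr => q _; rewrite mxE mulr_suml; apply: eq_bigr => p _.
by rewrite mxtrace_delta_mul outer_tensE !mxE mulrAC.
Qed.

Lemma FG_map_outer (v : 'cV[C]_(k * m)) :
  (fun X => F_map (v *m adjmx v) (G_map (v *m adjmx v) X)) =
  sandwich (unvec v *m adjmx (unvec v)).
Proof.
apply: functional_extensionality => X.
by rewrite F_map_outer G_map_outer trmxK /sandwich !mulmxA.
Qed.

End PureStateMaps.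

Section HermitianSandwich.
Variables (C : numClosedFieldType) (n : nat) (A : 'M[C]_n).
Hypothesis hermA : adjmx A = A.

Lemma sandwich_selfadjoint : selfadjoint_map (sandwich A).
Proof.
move=> X Y; rewrite /tr_inner /sandwich !adjmxM hermA -!mulmxA mxtrace_mulC.
by rewrite !mulmxA.
Qed.

Lemma sandwich_positive : positive_map (sandwich A).
Proof.
move=> X [hermX posX]; rewrite /sandwich; split.
  by rewrite !adjmxM hermA hermX mulmxA.
by move=> v; have := posX (A *m v); rewrite adjmxM hermA !mulmxA.
Qed.

(* Invariance of W M_n W under the sandwich gives (1 - W) A W = 0, as
   ((1 - W) A W) ((1 - W) A W)^* = (1 - W) A W A (1 - W) and A W A lies in
   the corner. *)
Lemma sandwich_corner_inv_comm W :
  orth_proj W -> corner_inv (sandwich A) W -> A *m W = W *m A.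
Proof.
move=> [hermW WW] /(_ 1%:M) [Y]; rewrite mulmx1 WW /sandwich => AWA.
have WcW : (1%:M - W) *m W = 0 by rewrite mulmxBl mul1mx WW subrr.
have WcAW : (1%:M - W) *m A *m W = 0.
  apply: mulmx_adjmx_eq0.
  have -> : (1%:M - W) *m A *m W *m adjmx ((1%:M - W) *m A *m W) =
            (1%:M - W) *m (A *m (W *m W) *m A) *m (1%:M - W).
    by rewrite !adjmxM adjmxB adjmx1 hermA hermW !mulmxA.
  by rewrite WW AWA !mulmxA WcW !mul0mx.
have AW : A *m W = W *m A *m W.
  by apply/eqP; rewrite -subr_eq0 -WcAW !mulmxBl !mul1mx.
have := congr1 (@adjmx C n n) AW; rewrite !adjmxM hermA hermW => WA.
by rewrite AW {2}WA mulmxA.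
Qed.

Lemma hermitian_eigenvector_in_proj W :
  orth_proj W -> A *m W = W *m A -> W != 0 ->
  exists (w : 'cV[C]_n) (mu : C),
    [/\ adjmx w *m w = 1%:M, W *m w = w & A *m w = mu *: w].
Proof.
move=> [_ WW] AW W0.
have normalA : A \is normalmx by apply/normalmxP; rewrite -!adjmx_trmxC hermA.
have := orthomx_spectralP normalA.
set P := spectralmx A; set d := spectral_diag A.
rewrite invmx_unitary ?spectral_unitarymx // -adjmx_trmxC => AP.
have PPt : P *m adjmx P = 1%:M.
  by rewrite adjmx_trmxC; apply/unitarymxP/spectral_unitarymx.
have APt : A *m adjmx P = adjmx P *m diag_mx d.
  by rewrite AP -!mulmxA PPt mulmx1.
(* The columns of P^* form an eigenbasis of A; since W commutes with A, the
   nonzero columns of W P^* are eigenvectors of A in the range of W. *)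
have : W *m adjmx P != 0.
  apply: contraNneq W0 => WPt0.
  by rewrite -[W]mulmx1 -(mulmx1C PPt) mulmxA WPt0 mul0mx.
case/matrix0Pn => i [r WPir].
set x := col r (W *m adjmx P).
have x0 : x != 0 by apply: contraNneq WPir => /colP/(_ i); rewrite !mxE => ->.
have [w [s [ww xw s0]]] := col_normalize x0.
have wx : w = s^-1 *: x by rewrite xw scalerA mulVf // scale1r.
exists w, (d 0 r); split => //; rewrite wx -scalemxAr.
  by rewrite /x colE !mulmxA WW.
rewrite scalerA mulrC -scalerA; congr (_ *: _).
have dr : diag_mx d *m delta_mx r 0 = d 0 r *: delta_mx r (0 : 'I_1).
  apply/matrixP => a b; rewrite mul_diag_mx !mxE (ord1 b).
  by case: eqP => [->|]; rewrite ?mulr0 ?mulr1.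
rewrite /x colE !mulmxA AW -(mulmxA W A) APt !mulmxA -(mulmxA _ (diag_mx d)).
by rewrite dr scalemxAr.
Qed.

Lemma irreducible_sandwich_block W :
  orth_proj W -> W != 0 -> corner_inv (sandwich A) W ->
  irreducible_on (sandwich A) W ->
  exists (w : 'cV[C]_n) (mu : C),
    [/\ adjmx w *m w = 1%:M, W = w *m adjmx w & A *m w = mu *: w].
Proof.
move=> projW W0 invW irrW; have AW := sandwich_corner_inv_comm projW invW.
have [w [mu [ww Ww Aw]]] := hermitian_eigenvector_in_proj projW AW W0.
have [hermW _] := projW.
have wW : adjmx w *m W = adjmx w by rewrite -{1}hermW -adjmxM Ww.
have wA : adjmx w *m A = mu^* *: adjmx w.
  by rewrite -{1}hermA -adjmxM Aw adjmxZ.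
have subW : corner_sub (w *m adjmx w) W.
  move=> X; exists (w *m adjmx w *m X *m (w *m adjmx w)).
  by rewrite !mulmxA Ww -(mulmxA _ (adjmx w) W) wW.
have invw : corner_inv (sandwich A) (w *m adjmx w).
  move=> X; exists ((mu * mu^*) *: X); rewrite /sandwich !mulmxA Aw.
  rewrite -(mulmxA _ (adjmx w) A) wA.
  by rewrite -!scalemxAl -!scalemxAr -!scalemxAl !scalerA.
have [w0|<-] := irrW _ (orth_proj_outer ww) subW invw; last by exists w, mu.
have := congr1 (fun M => adjmx w *m M *m w) w0.
rewrite mulmx0 mul0mx !mulmxA ww mul1mx ww => /matrixP/(_ 0 0).
by rewrite !mxE eqxx => /eqP; rewrite oner_eq0.
Qed.

Lemma sandwich_outer_cr (w : 'cV[C]_n) kap :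
  adjmx w *m w = 1%:M -> A = kap *: (w *m adjmx w) ->
  completely_reducible (sandwich A).
Proof.
move=> ww Aw; have projw := orth_proj_outer ww.
split; first exact: sandwich_selfadjoint.
split; first exact: sandwich_positive.
exists 1%N, (fun=> w *m adjmx w); split => //.
- by move=> i j; rewrite !ord1 eqxx.
- move=> _ X; exists ((kap * kap) *: X).
  rewrite Aw sandwichZ -scalemxAr -scalemxAl; congr (_ *: _).
  case: projw => _; rewrite /sandwich; set P := w *m _ => PP.
  by rewrite (mulmxA P (P *m X)) (mulmxA P P) PP -(mulmxA _ P P) PP.
- by move=> _ W projW subW _; exact: corner_sub_outer ww projW subW.
move=> X /(_ ord0 1%:M); case: projw => hermw PP.
rewrite /tr_inner mulmx1 PP hermw mxtrace_mulC -mulmxA mxtrace_mulC.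
rewrite trace_mx11 => wXw.
by rewrite Aw sandwichZ sandwich_outerE wXw scale0r scaler0.
Qed.

End HermitianSandwich.

Section SandwichBlocks.
Variables (C : numClosedFieldType) (n l : nat).
Variables (A : 'M[C]_n) (W : 'I_l -> 'M[C]_n).
Hypotheses (hermA : adjmx A = A) (projW : forall i, orth_proj (W i))
  (orthW : forall i j, i != j -> W i *m W j = 0)
  (invW : forall i, corner_inv (sandwich A) (W i))
  (irrW : forall i, irreducible_on (sandwich A) (W i))
  (sandwich_compl : forall X, (forall i Y, tr_inner X (W i *m Y *m W i) = 0) ->
                              sandwich A X = 0).
Arguments invW : clear implicits.
Arguments irrW : clear implicits.

Lemma sandwich_sum_blocks X :
  sandwich A X = \sum_i sandwich A (W i *m X *m W i).
Proof.
set Y := X - \sum_i W i *m X *m W i.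
have WYW j : W j *m Y *m W j = 0.
  have [_ WW] := projW j.
  rewrite /Y mulmxBr mulmxBl mulmx_sumr mulmx_suml (bigD1 j) //=.
  rewrite big1 => [|i ij].
    by rewrite addr0 !mulmxA WW -(mulmxA _ (W j) (W j)) WW subrr.
  by rewrite eq_sym in ij; rewrite !mulmxA (orthW ij) !mul0mx.
have : sandwich A Y = 0.
  apply: sandwich_compl => j Z; have [hermW _] := projW j; rewrite /tr_inner.
  have -> : Y *m adjmx (W j *m Z *m W j) = Y *m W j *m adjmx Z *m W j.
    by rewrite !adjmxM hermW !mulmxA.
  by rewrite mxtrace_mulC !mulmxA WYW !mul0mx mxtrace0.
rewrite /sandwich /Y mulmxBr mulmxBl mulmx_sumr mulmx_suml => /eqP.
by rewrite subr_eq0 => /eqP.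
Qed.

Lemma nonzero_block_outer i : A *m W i != 0 ->
  exists (w : 'cV[C]_n) (mu : C),
    [/\ adjmx w *m w = 1%:M, W i = w *m adjmx w, A *m w = mu *: w & mu != 0].
Proof.
move=> AW0; have W0 : W i != 0 by apply: contraNneq AW0 => ->; rewrite mulmx0.
have [w [mu [ww Ww Aw]]] :=
  irreducible_sandwich_block hermA (projW i) W0 (invW i) (irrW i).
exists w, mu; split=> //; apply: contraNneq AW0 => mu0.
by rewrite Ww mulmxA Aw mu0 scale0r mul0mx.
Qed.

Lemma nonzero_block_unique i j : A *m W i != 0 -> A *m W j != 0 -> i = j.
Proof.
move=> /nonzero_block_outer [w [mu [ww Wi Aw mu0]]].
move=> /nonzero_block_outer [u [nu [uu Wj Au nu0]]].
apply/eqP/negPn/negP => ij.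
have Wiw : W i *m w = w by rewrite Wi -mulmxA ww mulmx1.
have Wju : W j *m u = u by rewrite Wj -mulmxA uu mulmx1.
have uA : adjmx u *m A = nu^* *: adjmx u by rewrite -{1}hermA -adjmxM Au adjmxZ.
have : sandwich A (w *m adjmx u) = 0.
  rewrite sandwich_sum_blocks big1 // => r _; case: (eqVneq r i) => [->|ri].
    have [hermWi _] := projW i.
    have uWi : adjmx u *m W i = 0.
      by rewrite -hermWi -adjmxM -Wju mulmxA (orthW ij) mul0mx adjmx0.
    by rewrite /sandwich -(mulmxA _ _ (W i)) -(mulmxA w) uWi !(mulmx0, mul0mx).
  have Wrw : W r *m w = 0 by rewrite -Wiw mulmxA (orthW ri) mul0mx.
  by rewrite /sandwich (mulmxA (W r) w) Wrw !(mul0mx, mulmx0).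
rewrite /sandwich mulmxA Aw -mulmxA uA -scalemxAl -scalemxAr scalerA.
move=> /(congr1 (fun M => adjmx w *m M *m u)); rewrite mulmx0 mul0mx.
rewrite -scalemxAr -scalemxAl !mulmxA ww mul1mx uu => /matrixP/(_ 0 0).
rewrite !mxE eqxx mulr1 => /eqP.
by rewrite mulf_eq0 conjC_eq0 (negbTE mu0) (negbTE nu0).
Qed.

Lemma sandwich_single_block :
  exists w : 'cV[C]_n,
    orth_proj (w *m adjmx w) /\ sandwich A (1%:M - w *m adjmx w) = 0.
Proof.
have [i0 AWi0|AW0] := pickP (fun i => A *m W i != 0); last first.
  exists 0; rewrite !mul0mx subr0.
  split; first by split; rewrite ?adjmx0 ?mul0mx.
  rewrite sandwich_sum_blocks big1 // => i _.
  by move/negbFE/eqP: (AW0 i) => AWi; rewrite /sandwich !mulmxA AWi !mul0mx.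
have [w [mu [ww Wi0 _ _]]] := nonzero_block_outer AWi0.
have [_ PP] := orth_proj_outer ww.
exists w; split; first exact: orth_proj_outer.
rewrite sandwich_sum_blocks big1 // => j _; case: (eqVneq j i0) => [->|ji0].
  by rewrite Wi0 mulmxBr mulmx1 PP subrr /sandwich !(mul0mx, mulmx0).
have [AWj|AWj] := eqVneq (A *m W j) 0.
  by rewrite /sandwich !mulmxA AWj !mul0mx.
by rewrite (nonzero_block_unique AWj AWi0) eqxx in ji0.
Qed.

End SandwichBlocks.

Section GramSandwich.
Variables (C : numClosedFieldType) (k m : nat).

Lemma sandwich_gram_proj_eq0 (V : 'M[C]_(k, m)) Q :
  orth_proj Q -> sandwich (V *m adjmx V) Q = 0 -> Q *m V = 0.
Proof.
move=> [hermQ QQ] AQA0.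
have AQ0 : V *m adjmx V *m Q = 0.
  apply: mulmx_adjmx_eq0; rewrite -AQA0 /sandwich !adjmxM adjmxK hermQ.
  by rewrite -(mulmxA _ Q (Q *m _)) (mulmxA Q Q) QQ mulmxA.
have := congr1 (@adjmx C k k) AQ0; rewrite !adjmxM adjmxK hermQ adjmx0 => QA0.
apply: mulmx_adjmx_eq0.
by rewrite adjmxM hermQ mulmxA -(mulmxA Q V) QA0 mul0mx.
Qed.

Lemma cr_sandwich_gram_rank1 (V : 'M[C]_(k, m)) :
  completely_reducible (sandwich (V *m adjmx V)) ->
  exists w : 'cV[C]_k, V = w *m (adjmx w *m V).
Proof.
case=> _ [_ [l [W [projW orthW invW irrW compl]]]].
have hermA : adjmx (V *m adjmx V) = V *m adjmx V by rewrite adjmxM adjmxK.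
have [w [projw Aw0]] := sandwich_single_block hermA projW orthW invW irrW compl.
exists w; have := sandwich_gram_proj_eq0 (orth_projC projw) Aw0.
by rewrite mulmxBl mul1mx mulmxA => /eqP; rewrite subr_eq0 => /eqP.
Qed.

Lemma rank1_sandwich_gram_cr (a : 'cV[C]_k) (u : 'rV[C]_m) :
  completely_reducible (sandwich (a *m u *m adjmx (a *m u))).
Proof.
have [->|a0] := eqVneq a 0; first by rewrite !mul0mx; exact: sandwich0_cr.
have [w [s [ww -> _]]] := col_normalize a0.
set A := s *: w *m u *m adjmx (s *: w *m u).
have hermA : adjmx A = A by rewrite adjmxM adjmxK.
apply: (sandwich_outer_cr hermA (kap := s * s^* * (u *m adjmx u) 0 0) ww).
rewrite /A !adjmxM adjmxZ -!scalemxAl -!scalemxAr scalerA !mulmxA -(mulmxA w u).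
by rewrite {1}[u *m adjmx u]mx11_scalar mul_mx_scalar -scalemxAl scalerA.
Qed.

End GramSandwich.

Lemma rank1_state_outer (C : numClosedFieldType) n (g : 'M[C]_n) :
  is_state g -> \rank g = 1%N -> exists v : 'cV[C]_n, g = v *m adjmx v.
Proof.
move=> [hermg posg] rkg.
have g0 : g != 0 by apply: contra_eqN rkg => /eqP ->; rewrite mxrank0.
move: (col_base g) (row_base g) (mulmx_base g); rewrite rkg => u r gE.
have gij i j : g i j = u i 0 * r 0 j by rewrite -gE mxE big_ord1.
have [i0 ui0] : exists i, u i 0 != 0.
  have : u != 0 by apply: contraNneq g0 => u0; rewrite -gE u0 mul0mx.
  by case/matrix0Pn => i [j]; rewrite (ord1 j); exists i.
(* Hermitian symmetry forces the row factor to be proportional to u^* *)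
set c := (r 0 i0)^* / u i0 0.
have rE j : r 0 j = c * (u j 0)^*.
  have /matrixP/(_ i0 j) := hermg; rewrite adjmxE !gij rmorphM => rj.
  by rewrite /c mulrAC [_ * (u j 0)^*]mulrC rj mulrC mulKf.
have gc i j : g i j = c * (u i 0 * (u j 0)^*) by rewrite gij rE mulrCA.
have c_ge0 : 0 <= c.
  have := posg (delta_mx i0 0); rewrite adjmx_delta -rowE -colE !mxE gc.
  by rewrite pmulr_lge0 // mul_conjC_gt0.
exists (sqrtC c *: u); apply/matrixP => i j.
have sc : (sqrtC c)^* = sqrtC c by rewrite geC0_conj ?sqrtC_ge0.
rewrite gc adjmxZ -scalemxAl -scalemxAr scalerA sc -expr2 sqrtCK.
by rewrite !mxE big_ord1 adjmxE.
Qed.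

Theorem mainTheorem8 (R : realType) (k m : nat) (gamma : 'M[R[i]]_(k * m)) :
  is_state gamma -> \rank gamma = 1%N ->
  (CR gamma <->
   exists (a : 'cV[R[i]]_k) (b : 'cV[R[i]]_m),
     gamma = (a *t b) *m adjmx (a *t b)).
Proof.
move=> state_g rank_g; split.
- have [v ->] := rank1_state_outer state_g rank_g.
  rewrite /CR FG_map_outer => -[_ /cr_sandwich_gram_rank1 [w Vw]].
  set b := (adjmx w *m unvec v)^T; exists w, b.
  have vwb : unvec v = unvec (w *t b) by rewrite unvec_tens /b trmxK.
  by rewrite {1 2}(unvec_inj vwb).
- move=> [a [b gab]]; split=> //.
  by rewrite gab FG_map_outer unvec_tens; exact: rank1_sandwich_gram_cr.
Qed.
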